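(* Let $\varepsilon>0$. Let $(G,\sigma)$ be a finite connected signed graph satisfying $CD^{\sigma}(K,N)$ with $K\in\mathbb{R}$ and $N\in(0,\infty]$ such that $N>\frac{4}{(2+\varepsilon)^2}$, and let $\lambda^{\sigma}$ be a nonzero eigenvalue of $\Delta^\sigma$. Then \[ \lambda^{\sigma}\geq\frac{\varepsilon}{(2+\varepsilon)^{2}-\frac{4}{N}}\cdot\frac{1}{d(D+1)\lceil (D+1)/2\rceil}+\frac{2(2+\varepsilon)}{(2+\varepsilon)^{2}-\frac{4}{N}}K, \] where $d$ is the maximal vertex degree and $D$ the diameter of $G$. Moreover, if the multiplicity of $\lambda^\sigma$ is at least $2$ or $(G,\sigma)$ is balanced, then \[ \lambda^{\sigma}\geq\frac{\varepsilon}{(2+\varepsilon)^{2}-\frac{4}{N}}\cdot\frac{1}{dD\lceil D/2\rceil}+\frac{2(2+\varepsilon)}{(2+\varepsilon)^{2}-\frac{4}{N}}K. \] (Convention $\frac1N=0$ if $N=\infty$.)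
   Context: $G=(V,E)$ is a finite simple connected graph with degrees $d_x$; $\sigma:E\to\{\pm1\}$, $\sigma_{xy}=\sigma(\{x,y\})$. $(G,\sigma)$ is balanced if the product of signs along every cycle is $+1$. Signed Laplacian $\Delta^{\sigma}f(x)=\frac{1}{d_x}\sum_{y\sim x}(\sigma_{xy}f(y)-f(x))$; $\Delta$ is the case $\sigma\equiv+1$; $\lambda$ is an eigenvalue of $\Delta^\sigma$ if $-\Delta^\sigma f=\lambda f$ for some nonzero $f$. $\Gamma^{\sigma}(f,g)=\frac12\{\Delta(fg)-g\Delta^{\sigma}f-f\Delta^{\sigma}g\}$, $\Gamma_2^{\sigma}(f,g)=\frac12\{\Delta\Gamma^{\sigma}(f,g)-\Gamma^{\sigma}(g,\Delta^{\sigma}f)-\Gamma^{\sigma}(f,\Delta^{\sigma}g)\}$. $CD^{\sigma}(K,N)$ means $\Gamma_2^{\sigma}(f,f)(x)\ge\frac1N(\Delta^\sigma f)^2(x)+K\Gamma^\sigma(f,f)(x)$ for all $f:V\to\mathbb{R}$ and all $x\in V$. $\lceil\cdot\rceil$ is the ceiling function. *)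

From HB Require Import structures.
From mathcomp Require Import all_boot all_order all_algebra.
From mathcomp Require Import reals.
Set Implicit Arguments. Unset Strict Implicit. Unset Printing Implicit Defensive.
Import Order.TTheory GRing.Theory Num.Theory.
Local Open Scope ring_scope.

Section SignedGraph.
Variables (R : realType) (T : finType) (adj : rel T).

Definition simple_graph := symmetric adj /\ irreflexive adj.
Definition connected_graph := forall x y : T, connect adj x y.

Definition signing (sgn : T -> T -> R) :=
  forall x y, adj x y -> sgn x y = sgn y x /\ (sgn x y = 1 \/ sgn x y = -1).

Definition deg (x : T) : nat := #|[set y | adj x y]|.
Definition maxdeg : nat := \max_(x : T) deg x.

Definition reach_in (x y : T) (n : nat) : bool :=
  [exists p : n.-tuple T, path adj x p && (last x p == y)].
Definition dist (x y : T) : nat := find (reach_in x y) (iota 0 #|T|).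
Definition diam : nat := \max_(x : T) \max_(y : T) dist x y.

Definition lap (sgn : T -> T -> R) (f : T -> R) (x : T) : R :=
  (deg x)%:R^-1 * \sum_(y | adj x y) (sgn x y * f y - f x).
Definition lap0 (f : T -> R) : T -> R := lap (fun _ _ => 1) f.

Definition Gam (sgn : T -> T -> R) (f g : T -> R) (x : T) : R :=
  2^-1 * (lap0 (fun z => f z * g z) x - g x * lap sgn f x - f x * lap sgn g x).

Definition Gam2 (sgn : T -> T -> R) (f g : T -> R) (x : T) : R :=
  2^-1 * (lap0 (Gam sgn f g) x - Gam sgn g (lap sgn f) x
          - Gam sgn f (lap sgn g) x).

(* 1/N with the convention 1/oo = 0; None encodes N = oo *)
Definition invN (N : option R) : R := if N is Some n then n^-1 else 0.

Definition CD (sgn : T -> T -> R) (K : R) (N : option R) :=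
  forall (f : T -> R) (x : T),
    Gam2 sgn f f x >= invN N * (lap sgn f x) ^+ 2 + K * Gam sgn f f x.

Definition eigenfun (sgn : T -> T -> R) (lam : R) (f : T -> R) :=
  forall x, - lap sgn f x = lam * f x.
Definition signed_eigenvalue (sgn : T -> T -> R) (lam : R) :=
  exists f : T -> R, eigenfun sgn lam f /\ exists x, f x != 0.
Definition mult_ge2 (sgn : T -> T -> R) (lam : R) :=
  exists f g : T -> R, eigenfun sgn lam f /\ eigenfun sgn lam g /\
    forall a b : R, (forall x, a * f x + b * g x = 0) -> a = 0 /\ b = 0.

Definition balanced (sgn : T -> T -> R) :=
  forall p : seq T, ucycle adj p -> (3 <= size p)%N ->
    \prod_(x <- p) sgn x (next p x) = 1.

Definition bound (eps K : R) (N : option R) (a b : nat) : R :=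
  eps / ((2 + eps) ^+ 2 - 4 * invN N) * ((maxdeg * a * b)%N%:R)^-1
  + 2 * (2 + eps) / ((2 + eps) ^+ 2 - 4 * invN N) * K.

End SignedGraph.

(* Let [f] be an eigenfunction, [x0] a peak of [|f|] and [M] the maximum of [Gam f].
   Applying CD^sigma(K,N) at a maximum point of [Gam f + beta f^2], with
   [beta = (1 + eps/2) lam - K], gives
   [2 eps M <= (((2 + eps)^2 - 4/N) lam - 2 (2 + eps) K) f(x0)^2].
   Conversely, if a non-backtracking walk of length [n] from [x0] ends at a vertex where
   the value of [f], multiplied by the sign of the walk, has the sign opposite to [f(x0)],
   then telescoping along the walk, Cauchy-Schwarz and pairing consecutive steps at their
   common vertex give [f(x0)^2 <= 2 d n ceil(n/2) M].  Such a walk of length at most [D]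
   exists when [sigma] is switching equivalent to the all-positive signature through the
   signs [tau] of shortest walks from [x0] (then [tau f] is an eigenfunction of the
   unsigned Laplacian, hence orthogonal to the degree measure) and when [f] can be chosen
   to vanish somewhere (multiplicity at least 2); otherwise an edge violating [tau] gives
   one of length at most [D + 1]. *)

From HB Require Import structures.
From mathcomp Require Import all_boot all_order all_algebra.
From mathcomp Require Import reals.
From mathcomp Require Import ring lra zify.
From Stdlib Require Import Classical.
Set Implicit Arguments. Unset Strict Implicit. Unset Printing Implicit Defensive.
Import Order.TTheory GRing.Theory Num.Theory.
Local Open Scope ring_scope.

Section RealFacts.
Variable R : realFieldType.

Lemma sqr_sum_le (a : nat -> R) m :
  (\sum_(0 <= k < m) a k) ^+ 2 <= m%:R * \sum_(0 <= k < m) a k ^+ 2.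
Proof.
elim: m => [|m IHm]; first by rewrite big_geq // expr0n /= mul0r.
rewrite !big_nat_recr //= -natr1.
move: IHm; set A := \sum_(0 <= k < m) a k; set B := \sum_(0 <= k < m) a k ^+ 2.
have m_ge0 : 0 <= m%:R :> R by apply: ler0n.
have [->|m_neq0] := eqVneq (m%:R : R) 0.
  rewrite mul0r add0r mul1r => A2_le0.
  have -> : A = 0 by apply/eqP; rewrite -sqrf_eq0 eq_le A2_le0 sqr_ge0.
  by rewrite add0r lerDr sumr_ge0 // => k _; apply: sqr_ge0.
have m_gt0 : 0 < m%:R :> R by rewrite lt_def m_neq0.
move=> A2_le; rewrite -subr_ge0 -(pmulr_rge0 _ m_gt0).
have -> : m%:R * ((m%:R + 1) * (B + a m ^+ 2) - (A + a m) ^+ 2) =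
   (A - m%:R * a m) ^+ 2 + (m%:R + 1) * (m%:R * B - A ^+ 2) by ring.
by rewrite addr_ge0 ?sqr_ge0 // mulr_ge0 ?subr_ge0 // addr_ge0.
Qed.

Lemma sum_le_pairs (b : nat -> R) n B :
  (forall j, (2 * j < n)%N ->
     b (2 * j)%N + (if ((2 * j).+1 < n)%N then b (2 * j).+1 else 0) <= B) ->
  \sum_(0 <= k < n) b k <= (uphalf n)%:R * B.
Proof.
move=> pair_le; set u := uphalf n.
have [n_le_2u two_u_le_n1] : (n <= 2 * u)%N /\ (2 * u <= n.+1)%N.
  have := odd_double_half n.+1; rewrite -uphalfE -mul2n -/u.
  by case: odd => /=; lia.
pose c k := if (k < n)%N then b k else 0.
have sum_pairs v : \sum_(0 <= k < 2 * v) c k = \sum_(0 <= j < v) (c (2 * j)%N + c (2 * j).+1).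
  elim: v => [|v IHv]; first by rewrite !big_geq.
  have -> : (2 * v.+1 = (2 * v).+2)%N by lia.
  by rewrite !big_nat_recr //= IHv addrA.
have -> : \sum_(0 <= k < n) b k = \sum_(0 <= k < 2 * u) c k.
  rewrite (big_cat_nat (n := n) (p := (2 * u)%N)) //= [X in _ + X]big1_seq ?addr0.
    by apply: eq_big_nat => k /andP[_ kn]; rewrite /c kn.
  by move=> k /andP[_]; rewrite mem_index_iota /c => /andP[/leq_gtF ->].
have -> : u%:R * B = \sum_(0 <= j < u) B by rewrite sumr_const_nat subn0 mulr_natl.
rewrite sum_pairs; apply: ler_sum_nat => j /andP[_ ju].
have jn : (2 * j < n)%N by lia.
by rewrite /c jn; apply: pair_le.
Qed.

End RealFacts.

Lemma exists_argmax (R : realDomainType) (T : finType) (F : T -> R) (x0 : T) :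
  exists x, forall y, F y <= F x.
Proof. by have [x _ Fx_max] := @arg_maxP _ _ T x0 predT F erefl; exists x => y; apply: Fx_max. Qed.

Lemma exists_peak (R : realDomainType) (T : finType) (g : T -> R) :
  (exists x, g x != 0) -> exists2 x0, forall y, g y ^+ 2 <= g x0 ^+ 2 & g x0 != 0.
Proof.
move=> [x gx_neq0]; have [x0 g_peak] := exists_argmax (fun y => g y ^+ 2) x.
exists x0 => //; rewrite -sqrf_eq0 gt_eqF //.
by apply: lt_le_trans (g_peak x); rewrite exprn_even_gt0.
Qed.

Lemma sign_change_of_weighted_sum (R : realFieldType) (T : finType) (c G : T -> R) a x0 :
  (forall x, 0 <= c x) -> 0 < c x0 -> \sum_x c x * G x = 0 -> exists y, a * G y <= 0.
Proof.
move=> c_ge0 c_x0 sum0; apply: NNPP => no_change.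
have aG_gt0 y : 0 < a * G y.
  by rewrite ltNge; apply/negP => aGy_le0; apply: no_change; exists y.
have : 0 < a * \sum_x c x * G x.
  rewrite mulr_sumr (bigD1 x0) //=; apply: ltr_pwDl; first by rewrite mulrCA mulr_gt0 ?aG_gt0.
  by apply: sumr_ge0 => x _; rewrite mulrCA mulr_ge0 // ltW.
by rewrite sum0 mulr0 ltxx.
Qed.

Section SignedLaplacian.
Variables (R : realType) (T : finType) (adj : rel T) (sgn : T -> T -> R).
Hypothesis sgn_signing : signing adj sgn.

Lemma signing_sym x y : adj x y -> sgn x y = sgn y x.
Proof. by move=> /sgn_signing []. Qed.

Lemma signing_sqr x y : adj x y -> sgn x y ^+ 2 = 1.
Proof. by move=> /sgn_signing [_ [->|->]]; rewrite ?sqrrN expr1n. Qed.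

Lemma eq_lap (s : T -> T -> R) f1 f2 x : f1 =1 f2 -> lap adj s f1 x = lap adj s f2 x.
Proof. by move=> E; rewrite /lap; congr (_ * _); apply: eq_bigr => y _; rewrite !E. Qed.

Lemma lapZ (s : T -> T -> R) c f x : lap adj s (fun z => c * f z) x = c * lap adj s f x.
Proof.
by rewrite /lap mulrCA; congr (_ * _); rewrite mulr_sumr; apply: eq_bigr => y _; ring.
Qed.

Lemma lapD (s : T -> T -> R) f1 f2 x :
  lap adj s (fun z => f1 z + f2 z) x = lap adj s f1 x + lap adj s f2 x.
Proof.
by rewrite /lap -mulrDr -big_split; congr (_ * _); apply: eq_bigr => y _ /=; ring.
Qed.

Lemma deg_mul_lap (s : T -> T -> R) f x :
  (deg adj x)%:R * lap adj s f x = \sum_(y | adj x y) (s x y * f y - f x).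
Proof.
rewrite /lap mulrA; have [dx0|dx_neq0] := eqVneq (deg adj x) 0%N.
  rewrite dx0 !mul0r big_pred0 ?mul0r // => y; apply/negbTE/negP => xy.
  by move/eqP: dx0; apply/negP; rewrite -lt0n; apply/card_gt0P; exists y; rewrite inE.
by rewrite mulfV ?mul1r // pnatr_eq0.
Qed.

Lemma Gam_sqrE f x :
  Gam adj sgn f f x = 2^-1 * (deg adj x)%:R^-1 * \sum_(y | adj x y) (sgn x y * f y - f x) ^+ 2.
Proof.
rewrite /Gam /lap0 /lap.
have -> : \sum_(y | adj x y) (sgn x y * f y - f x) ^+ 2 =
  \sum_(y | adj x y) ((1 * (f y * f y) - f x * f x) - f x * (sgn x y * f y - f x)
     - f x * (sgn x y * f y - f x)).
  apply: eq_bigr => y /signing_sqr sxy2.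
  have -> : (sgn x y * f y - f x) ^+ 2 =
    sgn x y ^+ 2 * f y ^+ 2 - 2 * sgn x y * f y * f x + f x ^+ 2 by ring.
  by rewrite sxy2; ring.
by rewrite !sumrB -!mulr_sumr !sumrB; ring.
Qed.

Lemma Gam_ge0 f x : 0 <= Gam adj sgn f f x.
Proof.
rewrite Gam_sqrE; apply: mulr_ge0; first by rewrite mulr_ge0 ?invr_ge0 ?ler0n.
by apply: sumr_ge0 => y _; apply: sqr_ge0.
Qed.

Lemma lap_eigenfun lam f x : eigenfun adj sgn lam f -> lap adj sgn f x = - lam * f x.
Proof. by move=> Hf; rewrite mulNr -Hf opprK. Qed.

Lemma Gam_lap_eigenfun lam f x : eigenfun adj sgn lam f ->
  Gam adj sgn f (lap adj sgn f) x = - lam * Gam adj sgn f f x.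
Proof.
move=> Hf; rewrite /Gam /lap0.
rewrite (eq_lap _ (f2 := fun z => - lam * (f z * f z))); last first.
  by move=> z; rewrite (lap_eigenfun _ Hf); ring.
rewrite (eq_lap _ (f1 := lap adj sgn f) (f2 := fun z => - lam * f z)); last first.
  by move=> z; rewrite (lap_eigenfun _ Hf).
by rewrite !lapZ !(lap_eigenfun _ Hf); ring.
Qed.

Lemma lap0_le0_at_max (h : T -> R) x : (forall y, h y <= h x) -> lap0 adj h x <= 0.
Proof.
move=> hmax; rewrite /lap0 /lap mulr_ge0_le0 ?invr_ge0 ?ler0n //.
by apply: sumr_le0 => y _; rewrite mul1r subr_le0.
Qed.

(* At a maximum point of [Gam f + beta f^2] the unsigned Laplacian of this
   function is nonpositive; CD turns this into an upper bound on [Gam f]. *)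
Lemma CD_max_principle K N lam beta f x :
  CD adj sgn K N -> eigenfun adj sgn lam f ->
  (forall y, Gam adj sgn f f y + beta * (f y * f y) <= Gam adj sgn f f x + beta * (f x * f x)) ->
  0 <= (lam - beta - K) * Gam adj sgn f f x + (beta * lam - invN N * lam ^+ 2) * (f x * f x).
Proof.
move=> HCD Hf hmax.
have CDx := HCD f x.
rewrite /Gam2 /lap0 !(Gam_lap_eigenfun _ Hf) (lap_eigenfun _ Hf) in CDx.
have := lap0_le0_at_max hmax; rewrite /lap0 lapD lapZ.
have GamxE : Gam adj sgn f f x = 2^-1 * (lap adj (fun _ _ => 1) (fun z => f z * f z) x
   - 2 * f x * lap adj sgn f x) by rewrite /Gam /lap0; ring.
rewrite (lap_eigenfun _ Hf) in GamxE.
set A := lap _ _ (Gam _ _ _ _) x in CDx *.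
set B := lap _ _ (fun z => f z * f z) x in GamxE *.
set G := Gam _ _ _ _ x in CDx GamxE *.
have -> : B = 2 * G - 2 * lam * (f x * f x) by rewrite GamxE; field.
move=> Lmax; nra.
Qed.

Lemma eigenfun_lincomb lam f1 f2 a b :
  eigenfun adj sgn lam f1 -> eigenfun adj sgn lam f2 ->
  eigenfun adj sgn lam (fun y => a * f1 y + b * f2 y).
Proof.
move=> Hf1 Hf2 x; rewrite lapD !lapZ.
by rewrite !(lap_eigenfun _ Hf1) !(lap_eigenfun _ Hf2); ring.
Qed.

End SignedLaplacian.

Lemma mult_ge2_vanishing_eigenfun (R : realType) (T : finType) (adj : rel T)
    (sgn : T -> T -> R) lam :
  mult_ge2 adj sgn lam -> exists g z, [/\ eigenfun adj sgn lam g, exists x, g x != 0 & g z = 0].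
Proof.
move=> [f1 [f2 [Hf1 [Hf2 indep]]]].
have [z f1z_neq0] : exists z, f1 z != 0.
  apply: NNPP => f1_eq0; have [|/eqP] := indep 1 0; last by rewrite oner_eq0.
  move=> x; rewrite mul0r addr0 mul1r; apply: NNPP => f1x.
  by apply: f1_eq0; exists x; apply/eqP.
exists (fun y => f2 z * f1 y + - f1 z * f2 y), z; split.
- exact: eigenfun_lincomb.
- apply: NNPP => g_eq0; move: f1z_neq0; rewrite -oppr_eq0.
  have [|_ ->] := indep (f2 z) (- f1 z); last by rewrite eqxx.
  by move=> x; apply: NNPP => gx; apply: g_eq0; exists x; apply/eqP.
- by rewrite mulNr mulrC addrN.
Qed.

Section Walks.
Variables (R : realType) (T : finType) (adj : rel T) (sgn : T -> T -> R).
Hypotheses (adj_sym : symmetric adj) (sgn_signing : signing adj sgn).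

(* A walk of length [n] is the vertex sequence [w 0, ..., w n]; later values
   of [w] are ignored. *)
Definition walk (w : nat -> T) n := forall i, (i < n)%N -> adj (w i) (w i.+1).
Definition wsign (w : nat -> T) n : R := \prod_(0 <= i < n) sgn (w i) (w i.+1).
Definition non_backtracking (w : nat -> T) n :=
  forall k, (0 < k)%N -> (k < n)%N -> w k.-1 <> w k.+1.

Definition wdrop m (w : nat -> T) i := w (m + i)%N.
Definition wcat m (w1 w2 : nat -> T) i := if (i <= m)%N then w1 i else w2 (i - m)%N.
Definition wrev n (w : nat -> T) i := w (n - i)%N.
Definition wedge (u v : T) i := if i is 0 then u else v.

Lemma eq_wsign w1 w2 n : (forall i, (i <= n)%N -> w1 i = w2 i) -> wsign w1 n = wsign w2 n.
Proof. by move=> E; apply: eq_big_nat => i /andP[_ ni]; rewrite !E // ltnW. Qed.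

Lemma walk_leq w n m : walk w n -> (m <= n)%N -> walk w m.
Proof. by move=> Hw mn i im; apply: Hw; apply: leq_trans mn. Qed.

Lemma walk_drop w m n : walk w (m + n) -> walk (wdrop m w) n.
Proof. by move=> Hw i ni; rewrite /wdrop addnS; apply: Hw; rewrite ltn_add2l. Qed.

Lemma wsignD w m n : wsign w (m + n) = wsign w m * wsign (wdrop m w) n.
Proof.
rewrite /wsign (big_cat_nat (n := m)) ?leq_addr //=; congr (_ * _).
by rewrite -{1}[m]add0n big_addn addKn; apply: eq_bigr => i _; rewrite /wdrop addnC addnS.
Qed.

Lemma wdrop_wcat m w1 w2 i : w1 m = w2 0%N -> wdrop m (wcat m w1 w2) i = w2 i.
Proof.
rewrite /wdrop /wcat => e; case: i => [|i]; first by rewrite addn0 leqnn.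
by rewrite addnS ltnNge leq_addr /= subSn ?leq_addr // addKn.
Qed.

Lemma walk_cat m n w1 w2 : w1 m = w2 0%N -> walk w1 m -> walk w2 n ->
  walk (wcat m w1 w2) (m + n).
Proof.
move=> e Hw1 Hw2 i imn; rewrite /wcat; case: (leqP i.+1 m) => [im|mi].
  by rewrite ltnW //; apply: Hw1.
case: (leqP i m) => [im|mi']; last first.
  by rewrite subSn //; apply: Hw2; lia.
have -> : i = m by lia.
by rewrite subSnn e; apply: Hw2; lia.
Qed.

Lemma wsign_cat m n w1 w2 : w1 m = w2 0%N ->
  wsign (wcat m w1 w2) (m + n) = wsign w1 m * wsign w2 n.
Proof.
move=> e; rewrite wsignD; congr (_ * _).
  by apply: eq_wsign => i im; rewrite /wcat im.
by apply: eq_wsign => i _; rewrite wdrop_wcat.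
Qed.

Lemma walk_rev w n : walk w n -> walk (wrev n w) n.
Proof.
move=> Hw i ni; rewrite /wrev adj_sym.
have -> : (n - i = (n - i.+1).+1)%N by lia.
by apply: Hw; lia.
Qed.

Lemma wsign_rev w n : walk w n -> wsign (wrev n w) n = wsign w n.
Proof.
move=> Hw; rewrite /wsign big_nat_rev /= add0n; apply: eq_big_nat => i /andP[_ ni].
rewrite /wrev (signing_sym sgn_signing).
  by congr (sgn (w _) (w _)); lia.
have -> : (n - (n - i.+1) = i.+1)%N by lia.
have -> : (n - (n - i.+1).+1 = i)%N by lia.
by rewrite adj_sym; apply: Hw.
Qed.

Lemma walk_edge u v : adj u v -> walk (wedge u v) 1.
Proof. by move=> uv [|]. Qed.

Lemma wsign_edge u v : wsign (wedge u v) 1 = sgn u v.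
Proof. by rewrite /wsign big_nat1. Qed.

Lemma wsign_sqr w n : walk w n -> wsign w n ^+ 2 = 1.
Proof.
elim: n => [|n IHn] Hw; first by rewrite /wsign big_geq ?expr1n.
rewrite /wsign big_nat_recr //= exprMn -/(wsign w n) IHn; last exact: walk_leq Hw (leqnSn n).
by rewrite mul1r (signing_sqr sgn_signing) //; apply: Hw.
Qed.

Lemma wsign_backtrack w : walk w 2 -> w 0%N = w 2%N -> wsign w 2 = 1.
Proof.
move=> Hw e; rewrite /wsign big_nat_recr //= big_nat1 -e.
rewrite -(signing_sym sgn_signing (Hw 0%N _)) // -expr2.
exact: (signing_sqr sgn_signing (Hw 0%N _)).
Qed.

Lemma walk_remove_backtrack w n k : walk w n -> (k.+2 <= n)%N -> w k = w k.+2 ->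
  let w' := wcat k w (wdrop k.+2 w) in
  [/\ walk w' (n - 2), w' 0%N = w 0%N, w' (n - 2)%N = w n & wsign w' (n - 2) = wsign w n].
Proof.
move=> Hw kn e w'.
have e' : w k = wdrop k.+2 w 0%N by rewrite /wdrop addn0.
have nE : (n - 2 = k + (n - k.+2))%N by lia.
split.
- rewrite nE; apply: walk_cat => //; first exact: walk_leq Hw (ltnW (ltnW kn)).
  by apply: walk_drop; rewrite subnKC.
- by rewrite /w' /wcat leq0n.
- rewrite /w' /wcat; case: (leqP (n - 2) k) => nk.
    have -> : (n - 2 = k)%N by lia.
    by rewrite e; congr w; lia.
  by rewrite /wdrop; congr w; lia.
- rewrite nE wsign_cat // [in RHS](_ : n = k + (2 + (n - k.+2)))%N; last by lia.
  have back : wsign (wdrop k w) 2 = 1.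
    apply: wsign_backtrack; last by rewrite /wdrop addn0 addn2.
    by apply: walk_drop; apply: (walk_leq Hw); lia.
  rewrite !wsignD back mul1r; congr (_ * _).
  by apply: eq_wsign => i _; rewrite /wdrop; congr w; lia.
Qed.

Lemma non_backtracking_reduce (P : T -> R -> Prop) w n :
  walk w n -> P (w n) (wsign w n) ->
  exists w' n', [/\ (n' <= n)%N, walk w' n', w' 0%N = w 0%N, P (w' n') (wsign w' n')
                  & non_backtracking w' n'].
Proof.
elim/ltn_ind: n w => n IHn w Hw HP.
have [nb|] := classic (non_backtracking w n); first by exists w, n; split.
move=> /not_all_ex_not [[|k] /not_all_ex_not [k0 /not_all_ex_not [kn /NNPP e]]] //=.
have [Hw' H0 Hn Hs] := walk_remove_backtrack Hw kn e.
have := IHn (n - 2)%N ltac:(lia) _ Hw'; rewrite Hn Hs.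
move=> /(_ HP) [w2 [n2 [n2n ? e20 ? ?]]].
by exists w2, n2; split; rewrite -?H0 //; lia.
Qed.

End Walks.

Section ClosedWalks.
Variables (R : realType) (T : finType) (adj : rel T) (sgn : T -> T -> R).
Hypotheses (adj_irr : irreflexive adj) (sgn_signing : signing adj sgn).

Lemma next_mkseq (w : nat -> T) n i : uniq (mkseq w n) -> w n = w 0%N -> (i < n)%N ->
  next (mkseq w n) (w i) = w i.+1.
Proof.
case: n => [//|n] w_uniq w_closed ni.
have wiE : w i = nth (w 0%N) (mkseq w n.+1) i by rewrite nth_mkseq.
rewrite next_nth {1}wiE mem_nth ?size_mkseq // wiE index_uniq ?size_mkseq //.
rewrite [mkseq w n.+1]/= /=; have [i_lt_n|n_le_i] := ltnP i n.
  by rewrite (nth_map 0%N) ?size_iota // nth_iota.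
have -> : i = n by lia.
by rewrite nth_default ?size_map ?size_iota.
Qed.

Lemma simple_closed_walk_ucycle w n : walk adj w n -> w n = w 0%N ->
  {in gtn n &, injective w} ->
  ucycle adj (mkseq w n) /\
  \prod_(x <- mkseq w n) sgn x (next (mkseq w n) x) = wsign sgn w n.
Proof.
move=> Hw w_closed w_inj.
have w_uniq : uniq (mkseq w n) by apply/mkseq_uniqP.
split.
  rewrite /ucycle w_uniq andbT.
  apply: (cycle_from_next w_uniq) => x /mapP [i]; rewrite mem_iota add0n => /andP[_ ni] ->.
  by rewrite next_mkseq //; apply: Hw.
rewrite big_map /wsign /index_iota subn0; apply: eq_big_seq => i.
by rewrite mem_iota add0n => /andP[_ ni]; rewrite next_mkseq.
Qed.

Lemma balanced_closed_walk_sign w n : balanced adj sgn -> walk adj w n -> w n = w 0%N ->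
  wsign sgn w n = 1.
Proof.
move=> bal; elim/ltn_ind: n w => n IHn w Hw w_closed.
have [[i [j [ij jn e]]]|w_inj] :=
  classic (exists i j, [/\ (i < j)%N, (j < n)%N & w i = w j]); last first.
  have {}w_inj : {in gtn n &, injective w}.
    move=> i j ni nj e; case: (ltngtP i j) => // [ij|ji]; case: w_inj.
    - by exists i, j.
    - by exists j, i.
  case: n IHn Hw w_closed w_inj => [|[|[|n]]] _ Hw w_closed w_inj.
  - by rewrite /wsign big_geq.
  - by have := Hw 0%N erefl; rewrite w_closed adj_irr.
  - by apply: (wsign_backtrack sgn_signing Hw); rewrite w_closed.
  have [cyc <-] := simple_closed_walk_ucycle Hw w_closed w_inj.
  by apply: (bal _ cyc); rewrite size_mkseq.
have loop_sign : wsign sgn (wdrop i w) (j - i) = 1.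
  apply: IHn; first by lia.
    by apply: walk_drop; rewrite subnKC ?(ltnW ij) //; apply: (walk_leq Hw); lia.
  by rewrite /wdrop addn0 subnKC // ltnW.
have join : w i = wdrop j w 0%N by rewrite /wdrop addn0.
have outer_sign : wsign sgn (wcat i w (wdrop j w)) (i + (n - j)) = 1.
  apply: IHn; first by lia.
    apply: walk_cat => //; first by apply: (walk_leq Hw); lia.
    by apply: walk_drop; rewrite subnKC // ltnW.
  rewrite /wcat leq0n ifF; last by apply/negbTE; rewrite -ltnNge; lia.
  by rewrite /wdrop -w_closed; congr w; lia.
rewrite wsign_cat // in outer_sign.
rewrite [n](_ : n = i + ((j - i) + (n - j)))%N; last by lia.
rewrite !wsignD loop_sign mul1r -outer_sign; congr (_ * _).
by apply: eq_wsign => k _; rewrite /wdrop; congr w; lia.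
Qed.

End ClosedWalks.

Section Switching.
Variables (R : realType) (T : finType) (adj : rel T) (sgn : T -> T -> R).
Hypotheses (adj_sym : symmetric adj) (adj_irr : irreflexive adj).
Hypothesis sgn_signing : signing adj sgn.

Definition walk_of_path (x : T) (p : seq T) i := nth x (x :: p) i.

Lemma walk_of_pathP x p : path adj x p -> walk adj (walk_of_path x p) (size p).
Proof. by move=> /(pathP x) Hp i; apply: Hp. Qed.

Lemma walk_of_path_last x p : walk_of_path x p (size p) = last x p.
Proof. by rewrite /walk_of_path -[size p]/((size (x :: p)).-1) nth_last. Qed.

Lemma exists_short_path : connected_graph adj -> forall x y : T,
  exists p, path adj x p && (last x p == y) && (size p <= diam adj)%N.
Proof.
move=> conn x y; have /connectP [p p_path ->] := conn x y.
have [q q_path q_uniq _] := shortenP p_path.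
have q_size : (size q < #|T|)%N.
  by have := max_card (mem (x :: q)); rewrite (card_uniqP q_uniq).
set z := last x q.
have reach_q : has (reach_in adj x z) (iota 0 #|T|).
  apply/hasP; exists (size q); rewrite ?mem_iota //.
  by apply/existsP; exists (in_tuple q); rewrite /= q_path eqxx.
have dist_lt : (dist adj x z < #|T|)%N by move: reach_q; rewrite has_find size_iota.
have := nth_find 0%N reach_q; rewrite nth_iota // add0n => /existsP [t /andP [t_path t_last]].
exists t; rewrite t_path t_last size_tuple /=.
exact: leq_trans (leq_bigmax z) (leq_bigmax x).
Qed.

Definition walk_potential (x0 : T) (tau : T -> R) := forall y, exists w n,
  [/\ walk adj w n, w 0%N = x0, w n = y, (n <= diam adj)%N & wsign sgn w n = tau y].

Lemma exists_walk_potential : connected_graph adj -> forall x0, exists tau, walk_potential x0 tau.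
Proof.
move=> conn x0; pose p y := xchoose (exists_short_path conn x0 y).
exists (fun y => wsign sgn (walk_of_path x0 (p y)) (size (p y))) => y.
have /andP[/andP[p_path /eqP p_last] p_size] := xchooseP (exists_short_path conn x0 y).
exists (walk_of_path x0 (p y)), (size (p y)).
by split => //; [exact: walk_of_pathP | rewrite walk_of_path_last].
Qed.

Lemma walk_potential_sqr x0 tau : walk_potential x0 tau -> forall y, tau y ^+ 2 = 1.
Proof. by move=> pot y; have [w [n [Hw _ _ _ <-]]] := pot y; exact: (wsign_sqr sgn_signing Hw). Qed.

(* [sgn] is obtained from the all-positive signature by switching with [tau]. *)
Definition balancing (tau : T -> R) := forall u v, adj u v -> sgn u v = tau u * tau v.

Lemma balanced_potential_balancing x0 tau :
  balanced adj sgn -> walk_potential x0 tau -> balancing tau.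
Proof.
move=> bal pot u v uv.
have [wu [nu [Hwu wu0 wun _ wu_sign]]] := pot u.
have [wv [nv [Hwv wv0 wvn _ wv_sign]]] := pot v.
pose wuv := wcat nu wu (wedge u v).
have wuv_join : wuv nu.+1 = wrev nv wv 0%N by rewrite /wuv /wcat ltnn subSnn /wrev subn0.
have Hwuv : walk adj wuv nu.+1 by rewrite -addn1; apply: walk_cat => //; exact: walk_edge.
have wuv_sign : wsign sgn wuv nu.+1 = tau u * sgn u v.
  by rewrite -addn1 wsign_cat // wsign_edge wu_sign.
have closed : wcat nu.+1 wuv (wrev nv wv) (nu.+1 + nv)%N = wcat nu.+1 wuv (wrev nv wv) 0%N.
  rewrite -[LHS]/(wdrop nu.+1 _ nv) wdrop_wcat // /wrev subnn wv0.
  by rewrite /wcat /wuv /wcat leq0n wu0.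
have := balanced_closed_walk_sign adj_irr sgn_signing bal
          (walk_cat wuv_join Hwuv (walk_rev adj_sym Hwv)) closed.
rewrite wsign_cat // wuv_sign (wsign_rev adj_sym sgn_signing Hwv) wv_sign => cyc_sign.
have tu := walk_potential_sqr pot u; have tv := walk_potential_sqr pot v.
transitivity (sgn u v * tau u ^+ 2 * tau v ^+ 2); first by rewrite tu tv !mulr1.
by rewrite -[RHS]mul1r -cyc_sign; ring.
Qed.

Lemma sum_deg_lap0 (h : T -> R) : \sum_x (deg adj x)%:R * lap0 adj h x = 0.
Proof.
rewrite (eq_bigr (fun x => \sum_(y | adj x y) h y - \sum_(y | adj x y) h x)); last first.
  by move=> x _; rewrite /lap0 deg_mul_lap -sumrB; apply: eq_bigr => y _; rewrite mul1r.
rewrite sumrB; apply/eqP; rewrite subr_eq0; apply/eqP.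
rewrite (exchange_big_dep predT) //=; apply: eq_bigr => y _.
by apply: eq_bigl => x; rewrite adj_sym.
Qed.

Lemma balancing_lap tau f x : balancing tau -> (forall y, tau y ^+ 2 = 1) ->
  tau x * lap adj sgn f x = lap0 adj (fun y => tau y * f y) x.
Proof.
move=> bal tau_sqr; rewrite /lap0 /lap mulrCA mulr_sumr; congr (_ * _).
apply: eq_bigr => y xy; rewrite bal // -(tau_sqr x); ring.
Qed.

Lemma balancing_eigenfun_deg_sum tau lam f : balancing tau -> (forall y, tau y ^+ 2 = 1) ->
  eigenfun adj sgn lam f -> lam != 0 -> \sum_x (deg adj x)%:R * (tau x * f x) = 0.
Proof.
move=> bal tau_sqr Hf lam_neq0; apply: (mulfI lam_neq0); rewrite mulr0 mulr_sumr.
rewrite -[RHS]oppr0 -[in RHS](sum_deg_lap0 (fun y => tau y * f y)) -sumrN.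
apply: eq_bigr => x _.
by rewrite -balancing_lap // (lap_eigenfun _ Hf); ring.
Qed.

End Switching.

Section WalkEstimate.
Variables (R : realType) (T : finType) (adj : rel T) (sgn : T -> T -> R).
Hypotheses (adj_sym : symmetric adj) (sgn_signing : signing adj sgn).

Definition wdiff (g : T -> R) (w : nat -> T) k := sgn (w k) (w k.+1) * g (w k.+1) - g (w k).

Lemma wsign_telescope g w n :
  wsign sgn w n * g (w n) - g (w 0%N) = \sum_(0 <= k < n) wsign sgn w k * wdiff g w k.
Proof.
elim: n => [|n IHn]; first by rewrite /wsign !big_geq // mul1r subrr.
by rewrite big_nat_recr //= -IHn /wsign big_nat_recr //= /wdiff; ring.
Qed.

Lemma sqr_signed_diff_sym g x y : adj x y ->
  (sgn x y * g y - g x) ^+ 2 = (sgn y x * g x - g y) ^+ 2.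
Proof.
move=> xy; rewrite -(signing_sym sgn_signing xy).
have sxy2 := signing_sqr sgn_signing xy.
apply/eqP; rewrite -subr_eq0; apply/eqP.
transitivity ((sgn x y ^+ 2 - 1) * (g y ^+ 2 - g x ^+ 2)); first by ring.
by rewrite sxy2 subrr mul0r.
Qed.

Lemma sum_sqr_diff_Gam g y : (0 < deg adj y)%N ->
  \sum_(z | adj y z) (sgn y z * g z - g y) ^+ 2 = 2 * (deg adj y)%:R * Gam adj sgn g g y.
Proof. by move=> dy; rewrite (Gam_sqrE sgn_signing); field; rewrite pnatr_eq0 -lt0n. Qed.

(* Two consecutive steps of a non-backtracking walk are distinct edges at w k.+1. *)
Lemma wdiff_pair_le g w n k : walk adj w n -> non_backtracking w n -> (k < n)%N ->
  wdiff g w k ^+ 2 + (if (k.+1 < n)%N then wdiff g w k.+1 ^+ 2 else 0)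
  <= 2 * (deg adj (w k.+1))%:R * Gam adj sgn g g (w k.+1).
Proof.
move=> Hw nb kn; set y := w k.+1.
have yx : adj y (w k) by rewrite adj_sym; apply: Hw.
have dy : (0 < deg adj y)%N by apply/card_gt0P; exists (w k); rewrite inE.
rewrite -sum_sqr_diff_Gam // (bigD1 (w k)) //= /wdiff sqr_signed_diff_sym -/y 1?adj_sym //.
rewrite lerD2l; case: ifP => kn1; last by apply: sumr_ge0 => z _; apply: sqr_ge0.
rewrite (bigD1 (w k.+2)) /=; last by rewrite Hw //=; apply/eqP => e; exact: nb k.+1 _ kn1 (esym e).
by rewrite lerDl sumr_ge0 // => z _; apply: sqr_ge0.
Qed.

Lemma deg_le_maxdeg y : (deg adj y <= maxdeg adj)%N.
Proof. exact: (leq_bigmax y). Qed.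

Lemma sign_change_walk_sqr_le g w n M : walk adj w n -> non_backtracking w n ->
  g (w 0%N) * (wsign sgn w n * g (w n)) <= 0 -> (forall y, Gam adj sgn g g y <= M) ->
  g (w 0%N) ^+ 2 <= 2 * (maxdeg adj * n * uphalf n)%N%:R * M.
Proof.
move=> Hw nb sign_change Gam_le.
have M_ge0 : 0 <= M := le_trans (Gam_ge0 sgn_signing g (w 0%N)) (Gam_le _).
have start_le : g (w 0%N) ^+ 2 <= (wsign sgn w n * g (w n) - g (w 0%N)) ^+ 2 by nra.
rewrite wsign_telescope in start_le; apply: (le_trans start_le).
apply: (le_trans (sqr_sum_le _ _)).
have -> : \sum_(0 <= k < n) (wsign sgn w k * wdiff g w k) ^+ 2 =
          \sum_(0 <= k < n) wdiff g w k ^+ 2.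
  apply: eq_big_nat => k /andP[_ kn].
  by rewrite exprMn (wsign_sqr sgn_signing (walk_leq Hw (ltnW kn))) mul1r.
apply: le_trans (ler_wpM2l (ler0n _ _) (sum_le_pairs (B := 2 * (maxdeg adj)%:R * M) _)) _.
  move=> j jn; apply: (le_trans (wdiff_pair_le _ Hw nb jn)).
  rewrite -!mulrA ler_pM2l // ler_pM ?ler0n ?Gam_ge0 // ler_nat.
  exact: deg_le_maxdeg.
by rewrite !natrM; lra.
Qed.

End WalkEstimate.

Lemma invN_bounds (R : realType) (eps : R) N : 0 < eps ->
  (if N is Some n then 0 < n /\ 4 / (2 + eps) ^+ 2 < n else True) ->
  0 <= invN N /\ 0 < (2 + eps) ^+ 2 - 4 * invN N.
Proof.
move=> eps_gt0; have sq_gt0 : 0 < (2 + eps) ^+ 2 by rewrite exprn_gt0 // ltr_wpDr // ltW.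
case: N => [n [n_gt0 n_gt]|_] /=; last by rewrite mulr0 subr0.
split; first by rewrite invr_ge0 ltW.
by rewrite subr_gt0 -ltr_pdivlMr ?invr_gt0 // invrK mulrC -(ltr_pdivrMr _ _ sq_gt0).
Qed.

Section EigenvalueEstimate.
Variables (R : realType) (T : finType) (adj : rel T) (sgn : T -> T -> R).
Hypothesis sgn_signing : signing adj sgn.
Variables (eps K lam : R) (N : option R) (g : T -> R).
Hypotheses (HCD : CD adj sgn K N) (Hg : eigenfun adj sgn lam g).

Local Notation Gamg := (Gam adj sgn g g).

Lemma eigenvalue_ge0 x0 : (forall y, g y ^+ 2 <= g x0 ^+ 2) -> g x0 != 0 -> 0 <= lam.
Proof.
move=> g_peak gx0_neq0.
have gx0_sq_gt0 : 0 < g x0 ^+ 2 by rewrite exprn_even_gt0.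
rewrite -(pmulr_lge0 _ gx0_sq_gt0).
have -> : lam * g x0 ^+ 2 = g x0 * (- lap adj sgn g x0) by rewrite Hg; ring.
rewrite /lap mulrN mulrCA mulr_sumr -mulrN -sumrN mulr_ge0 ?invr_ge0 ?ler0n //.
apply: sumr_ge0 => y /sgn_signing [_ sxy]; have := g_peak y.
by case: sxy => ->; nra.
Qed.

Lemma CD_le_eigenvalue ys : 0 <= invN N ->
  (forall y, Gamg y <= Gamg ys) -> 0 < Gamg ys -> K <= lam.
Proof.
move=> invN_ge0 Gam_max Gam_gt0.
have MP : 0 <= (lam - 0 - K) * Gamg ys + (0 * lam - invN N * lam ^+ 2) * (g ys * g ys).
  by apply: CD_max_principle HCD Hg _ => y; rewrite !mul0r !addr0.
have : 0 <= invN N * lam ^+ 2 * (g ys * g ys).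
  by rewrite -expr2; apply: mulr_ge0; [apply: mulr_ge0 | ]; rewrite ?sqr_ge0.
nra.
Qed.

Lemma gradient_estimate x0 ys : 0 < eps -> 0 <= invN N -> 0 < lam ->
  (forall y, g y ^+ 2 <= g x0 ^+ 2) -> (forall y, Gamg y <= Gamg ys) -> 0 < Gamg ys ->
  2 * eps * Gamg ys
  <= (((2 + eps) ^+ 2 - 4 * invN N) * lam - 2 * (2 + eps) * K) * g x0 ^+ 2.
Proof.
move=> eps_gt0 invN_ge0 lam_gt0 g_peak Gam_max Gam_gt0.
have K_le := CD_le_eigenvalue invN_ge0 Gam_max Gam_gt0.
set q := invN N in invN_ge0 *; set s := 1 + eps / 2; set beta := s * lam - K.
have beta_ge0 : 0 <= beta by rewrite /beta /s; nra.
have [x x_max] := exists_argmax (fun y => Gamg y + beta * (g y * g y)) x0.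
have := CD_max_principle HCD Hg x_max.
set Gx := Gamg x; set gx := g x * g x => MP.
have gx_ge0 : 0 <= gx by rewrite /gx -expr2 sqr_ge0.
have gx_le : gx <= g x0 ^+ 2 by rewrite /gx -expr2.
have Gys_le : Gamg ys <= Gx + beta * gx.
  have := x_max ys; have : 0 <= beta * (g ys * g ys) by rewrite mulr_ge0 // -expr2 sqr_ge0.
  rewrite -/q -/Gx -/gx; lra.
have Gx_le : (eps / 2) * Gx <= (beta - q * lam) * gx.
  rewrite -(ler_pM2l lam_gt0); move: MP; rewrite -/q /beta /s; nra.
have Gys_le' : (eps / 2) * Gamg ys <= (s * beta - q * lam) * gx.
  by move: Gx_le Gys_le; rewrite /s; nra.
have coef_gt0 : 0 < s * beta - q * lam.
  by have : 0 < (s * beta - q * lam) * gx; [apply: lt_le_trans Gys_le'; nra | nra].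
have : (eps / 2) * Gamg ys <= (s * beta - q * lam) * g x0 ^+ 2.
  by apply: (le_trans Gys_le'); rewrite ler_pM2l.
by rewrite /beta /s; nra.
Qed.

End EigenvalueEstimate.

Section LowerBound.
Variables (R : realType) (T : finType) (adj : rel T) (sgn : T -> T -> R).
Hypotheses (adj_sym : symmetric adj) (adj_irr : irreflexive adj).
Hypotheses (conn : connected_graph adj) (sgn_signing : signing adj sgn).
Variables (eps K lam : R) (N : option R).
Hypotheses (eps_gt0 : 0 < eps)
  (N_gt : if N is Some n then 0 < n /\ 4 / (2 + eps) ^+ 2 < n else True)
  (HCD : CD adj sgn K N) (lam_neq0 : lam != 0).

Lemma bound_le_from_estimate (a b P : nat) : (0 < P)%N -> (P <= maxdeg adj * a * b)%N ->
  eps <= P%:R * (((2 + eps) ^+ 2 - 4 * invN N) * lam - 2 * (2 + eps) * K) ->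
  bound adj eps K N a b <= lam.
Proof.
move=> P_gt0 P_le; have [_ den_gt0] := invN_bounds eps_gt0 N_gt.
set den := _ - 4 * invN N in den_gt0 *; set X := den * lam - _ => eps_le.
have X_gt0 : 0 < X.
  by rewrite -(pmulr_rgt0 _ (_ : 0 < P%:R)) ?ltr0n //; apply: lt_le_trans eps_le.
set P' := (maxdeg adj * a * b)%N.
have P_le' : P%:R <= P'%:R :> R by rewrite ler_nat.
have P'_gt0 : 0 < P'%:R :> R by apply: lt_le_trans P_le'; rewrite ltr0n.
have eps_P'_le : eps / P'%:R <= X.
  rewrite ler_pdivrMr //; apply: (le_trans eps_le).
  by rewrite [X * _]mulrC ler_wpM2r // ltW.
rewrite /bound -/den.
have -> : eps / den * (P'%:R)^-1 + 2 * (2 + eps) / den * K =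
          (eps / P'%:R + 2 * (2 + eps) * K) / den by field; rewrite !gt_eqF.
by rewrite ler_pdivrMr //; move: eps_P'_le; rewrite /X; lra.
Qed.

Lemma sign_change_walk_bound g x0 L w n : eigenfun adj sgn lam g ->
  (forall y, g y ^+ 2 <= g x0 ^+ 2) -> g x0 != 0 ->
  walk adj w n -> w 0%N = x0 -> (n <= L)%N -> g x0 * (wsign sgn w n * g (w n)) <= 0 ->
  bound adj eps K N L (uphalf L) <= lam.
Proof.
move=> Hg g_peak gx0_neq0 Hw w0 nL sign_change.
have [w' [n' [n'_le Hw' w'0 sign_change' nb]]] :=
  non_backtracking_reduce (P := fun y s => g x0 * (s * g y) <= 0) sgn_signing Hw sign_change.
rewrite w0 in w'0.
have [ys Gam_max] := exists_argmax (Gam adj sgn g g) x0.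
have := sign_change_walk_sqr_le adj_sym sgn_signing Hw' nb _ Gam_max.
rewrite w'0 => /(_ sign_change') walk_le.
have [invN_ge0 _] := invN_bounds eps_gt0 N_gt.
have gx0_sq_gt0 : 0 < g x0 ^+ 2 by rewrite exprn_even_gt0.
set P := (maxdeg adj * n' * uphalf n')%N in walk_le.
have Gam_ys_ge0 := Gam_ge0 sgn_signing g ys.
have P_gt0 : (0 < P)%N.
  rewrite lt0n; apply/eqP => P0; move: walk_le.
  by rewrite P0 mulr0 mul0r leNgt gx0_sq_gt0.
have Gam_gt0 : 0 < Gam adj sgn g g ys.
  rewrite lt_def Gam_ys_ge0 andbT; apply/eqP => G0; move: walk_le.
  by rewrite G0 mulr0 leNgt gx0_sq_gt0.
have lam_gt0 : 0 < lam by rewrite lt_def lam_neq0 (eigenvalue_ge0 sgn_signing Hg g_peak).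
have grad := gradient_estimate HCD Hg eps_gt0 invN_ge0 lam_gt0 g_peak Gam_max Gam_gt0.
apply: (bound_le_from_estimate P_gt0).
  rewrite /P -!mulnA leq_mul2l leq_mul ?orbT //; first exact: leq_trans n'_le nL.
  by rewrite !uphalfE half_leq // ltnS (leq_trans n'_le nL).
set G := Gam _ _ _ _ ys in walk_le grad *; set X := _ * lam - _ in grad *.
rewrite -(ler_pM2r gx0_sq_gt0) -mulrA.
apply: (le_trans (_ : _ <= eps * (2 * P%:R * G))); first by rewrite ler_pM2l.
rewrite (_ : eps * _ = P%:R * (2 * eps * G)); last by ring.
exact: (ler_wpM2l (ler0n R P) grad).
Qed.

Lemma potential_sign_change_bound g x0 tau L z : eigenfun adj sgn lam g ->
  (forall y, g y ^+ 2 <= g x0 ^+ 2) -> g x0 != 0 ->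
  walk_potential adj sgn x0 tau -> (diam adj <= L)%N -> g x0 * (tau z * g z) <= 0 ->
  bound adj eps K N L (uphalf L) <= lam.
Proof.
move=> Hg g_peak gx0_neq0 pot DL sign_change.
have [w [n [Hw w0 wn nD w_sign]]] := pot z.
apply: (sign_change_walk_bound Hg g_peak gx0_neq0 Hw w0 (leq_trans nD DL)).
by rewrite w_sign wn.
Qed.

Lemma balancing_bound g x0 tau L : eigenfun adj sgn lam g ->
  (forall y, g y ^+ 2 <= g x0 ^+ 2) -> g x0 != 0 ->
  walk_potential adj sgn x0 tau -> (diam adj <= L)%N -> balancing adj sgn tau ->
  bound adj eps K N L (uphalf L) <= lam.
Proof.
move=> Hg g_peak gx0_neq0 pot DL bal.
have deg_x0 : 0 < (deg adj x0)%:R :> R.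
  rewrite ltr0n lt0n; apply/eqP => dx0; move/eqP: gx0_neq0; apply.
  have := Hg x0; rewrite /lap dx0 invr0 mul0r oppr0 => /esym/eqP.
  by rewrite mulf_eq0 (negbTE lam_neq0) => /eqP.
have deg_sum := balancing_eigenfun_deg_sum adj_sym bal (walk_potential_sqr sgn_signing pot)
  Hg lam_neq0.
have [y sign_change] :=
  sign_change_of_weighted_sum (g x0) (fun x => ler0n R (deg adj x)) deg_x0 deg_sum.
exact: potential_sign_change_bound Hg g_peak gx0_neq0 pot DL sign_change.
Qed.

(* If [tau g] has no sign change, extending the walk to [u] by an edge [uv] that
   violates [tau] gives a walk to [v] of sign [- tau v]. *)
Lemma unbalancing_bound g x0 tau : eigenfun adj sgn lam g ->
  (forall y, g y ^+ 2 <= g x0 ^+ 2) -> g x0 != 0 ->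
  walk_potential adj sgn x0 tau -> ~ balancing adj sgn tau ->
  bound adj eps K N (diam adj).+1 (uphalf (diam adj).+1) <= lam.
Proof.
move=> Hg g_peak gx0_neq0 pot unbal.
have [[y sign_change]|no_change] := classic (exists y, g x0 * (tau y * g y) <= 0).
  apply: (potential_sign_change_bound Hg g_peak gx0_neq0 pot _ sign_change); exact: leqnSn.
have tau_sqr := walk_potential_sqr sgn_signing pot.
have [u [v [uv suv_neq]]] : exists u v, adj u v /\ sgn u v <> tau u * tau v.
  apply: NNPP => all_eq; apply: unbal => u v uv; apply: NNPP => suv_neq.
  by apply: all_eq; exists u, v.
have suv : sgn u v = - (tau u * tau v).
  have : (tau u * tau v) ^+ 2 = 1 by rewrite exprMn !tau_sqr mulr1.
  move/eqP; rewrite sqrf_eq1 => /orP[] /eqP tuv; rewrite tuv ?opprK in suv_neq *;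
  by have /sgn_signing [_ [] suvE] := uv; rewrite suvE in suv_neq *.
have [wu [nu [Hwu wu0 wun nuD wu_sign]]] := pot u.
apply: (sign_change_walk_bound Hg g_peak gx0_neq0
          (w := wcat nu wu (wedge u v)) (n := (nu + 1)%N)).
- by apply: walk_cat => //; exact: walk_edge.
- by rewrite /wcat leq0n.
- by rewrite addn1 ltnS.
have gv_pos : 0 < g x0 * (tau v * g v).
  by rewrite ltNge; apply/negP => gv_le0; apply: no_change; exists v.
rewrite wsign_cat // wsign_edge wu_sign suv.
rewrite -[wcat _ _ _ (nu + 1)%N]/(wdrop nu (wcat nu wu (wedge u v)) 1%N) wdrop_wcat //=.
move: (tau_sqr u); nra.
Qed.

Lemma vanishing_bound g x0 z : eigenfun adj sgn lam g ->
  (forall y, g y ^+ 2 <= g x0 ^+ 2) -> g x0 != 0 -> g z = 0 ->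
  bound adj eps K N (diam adj) (uphalf (diam adj)) <= lam.
Proof.
move=> Hg g_peak gx0_neq0 gz0.
have [p /andP[/andP[p_path /eqP p_last] p_size]] := exists_short_path conn x0 z.
apply: (sign_change_walk_bound Hg g_peak gx0_neq0
          (walk_of_pathP p_path) erefl p_size).
by rewrite walk_of_path_last p_last gz0 !mulr0.
Qed.

Lemma signed_eigenvalue_bound_diam_succ : signed_eigenvalue adj sgn lam ->
  bound adj eps K N (diam adj).+1 (uphalf (diam adj).+1) <= lam.
Proof.
move=> [f [Hf f_nz]]; have [x0 f_peak fx0_neq0] := exists_peak f_nz.
have [tau pot] := exists_walk_potential sgn conn x0.
have [bal|unbal] := classic (balancing adj sgn tau).
  exact: balancing_bound Hf f_peak fx0_neq0 pot (leqnSn _) bal.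
exact: unbalancing_bound Hf f_peak fx0_neq0 pot unbal.
Qed.

Lemma signed_eigenvalue_bound_diam : signed_eigenvalue adj sgn lam ->
  mult_ge2 adj sgn lam \/ balanced adj sgn ->
  bound adj eps K N (diam adj) (uphalf (diam adj)) <= lam.
Proof.
move=> [f [Hf f_nz]] [mult2|bal].
  have [g [z [Hg g_nz gz0]]] := mult_ge2_vanishing_eigenfun mult2.
  have [x0 g_peak gx0_neq0] := exists_peak g_nz.
  exact: vanishing_bound Hg g_peak gx0_neq0 gz0.
have [x0 f_peak fx0_neq0] := exists_peak f_nz.
have [tau pot] := exists_walk_potential sgn conn x0.
have bal_tau := balanced_potential_balancing adj_sym adj_irr sgn_signing bal pot.
exact: balancing_bound Hf f_peak fx0_neq0 pot (leqnn _) bal_tau.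
Qed.

End LowerBound.

Theorem theorem3p4 (R : realType) (T : finType) (adj : rel T)
    (sgn : T -> T -> R) (eps K lam : R) (N : option R) :
  simple_graph adj -> connected_graph adj -> signing adj sgn ->
  0 < eps ->
  (if N is Some n then 0 < n /\ 4 / (2 + eps) ^+ 2 < n else True) ->
  CD adj sgn K N ->
  signed_eigenvalue adj sgn lam -> lam != 0 ->
  bound adj eps K N (diam adj).+1 (uphalf (diam adj).+1) <= lam /\
  (mult_ge2 adj sgn lam \/ balanced adj sgn ->
   bound adj eps K N (diam adj) (uphalf (diam adj)) <= lam).
Proof.
move=> [adj_sym adj_irr] conn sgn_signing eps_gt0 N_gt HCD lam_eig lam_neq0.
split.
  exact: (signed_eigenvalue_bound_diam_succ adj_sym conn sgn_signing
    eps_gt0 N_gt HCD lam_neq0 lam_eig).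
exact: (signed_eigenvalue_bound_diam adj_sym adj_irr conn sgn_signing
  eps_gt0 N_gt HCD lam_neq0 lam_eig).
Qed.
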